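(* For $h,r>0$ with $\frac hr\le\omega$, let $\Pi(h,r)>0$ be the largest positive solution of $\Pi\cosh\frac h\Pi=r$. Then $$\sup\left\{\sinh\frac{h}{\Pi(h,r)}:\ h,r>0,\ \frac hr\le\omega\right\}<z_0,$$ where $z_0=\sqrt{\tfrac12(\sqrt5-1)}$.
   Context: Let $\Xi$ be the unique positive solution of $\xi\tanh\frac1\xi+\mathrm{sech}^2\frac1\xi=\xi$, and $\omega=\frac{1}{\Xi\cosh(1/\Xi)}$ (numerically $0.52<\omega<0.53$). *)

From Stdlib Require Export Reals.
Open Scope R_scope.

(* Xi is a positive solution of  xi*tanh(1/xi) + sech^2(1/xi) = xi
   (the paper asserts this positive solution is unique). *)
Definition Xi_spec (xi : R) : Prop :=
  0 < xi /\ xi * tanh (/ xi) + / (cosh (/ xi))^2 = xi.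

Definition omega (xi : R) : R := / (xi * cosh (/ xi)).

Definition is_Pi (h r P : R) : Prop :=
  0 < P /\ P * cosh (h / P) = r /\
  (forall Q, 0 < Q -> Q * cosh (h / Q) = r -> Q <= P).

Definition z0 : R := sqrt (/ 2 * (sqrt 5 - 1)).

Definition sinh_set (xi : R) (s : R) : Prop :=
  exists h r P, 0 < h /\ 0 < r /\ h / r <= omega xi /\ is_Pi h r P /\
    s = sinh (h / P).

(* With u = 1/xi, the defining equation of xi reduces to u = (1 + e^(-2u))/2, which pins
   u inside (1/2, 0.65), and omega = u / cosh u.  On [0, 0.65] the map x |-> x / cosh x is
   increasing, so for h/r <= omega the intermediate value theorem gives z in (0, u] with
   h cosh z = r z; then h/z solves Pi cosh(h/Pi) = r, whence Pi(h,r) >= h/z and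
   h/Pi(h,r) <= u.  The supremum is therefore at most sinh u < sinh 0.65 < 0.74 < z0. *)

From Stdlib Require Import Reals Lra Psatz.
Open Scope R_scope.

Lemma exp_pow (n : nat) (x : R) : exp x ^ n = exp (INR n * x).
Proof.
  induction n as [|n IH].
  - simpl. rewrite Rmult_0_l, exp_0. reflexivity.
  - rewrite <- tech_pow_Rmult, IH, S_INR, <- exp_plus. f_equal. ring.
Qed.

Lemma pow_one_plus_div_le_exp (n : nat) (x : R) :
  (0 < n)%nat -> - INR n <= x -> (1 + x / INR n) ^ n <= exp x.
Proof.
  intros Hn Hx.
  assert (Hn' : 0 < INR n) by (apply lt_0_INR; exact Hn).
  replace (exp x) with (exp (x / INR n) ^ n)
    by (rewrite exp_pow; f_equal; field; lra).
  apply pow_incr. split.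
  - replace (1 + x / INR n) with ((x + INR n) * / INR n) by (field; lra).
    apply Rmult_le_pos; [lra | left; apply Rinv_0_lt_compat; exact Hn'].
  - apply exp_ineq1_le.
Qed.

Lemma cosh_ge_1 (x : R) : 1 <= cosh x.
Proof.
  unfold cosh. rewrite exp_Ropp. pose proof (exp_pos x) as HE.
  set (E := exp x) in *.
  assert (Hsq : E + / E - 2 = (E - 1) ^ 2 * / E) by (field; lra).
  assert (0 <= (E - 1) ^ 2 * / E).
  { apply Rmult_le_pos; [apply pow2_ge_0 | left; apply Rinv_0_lt_compat; exact HE]. }
  lra.
Qed.

Lemma sinh_le (x y : R) : x <= y -> sinh x <= sinh y.
Proof. intros [H | ->]; [left; apply sinh_lt; exact H | right; reflexivity]. Qed.

Lemma exp_65_ge : 185 / 100 <= exp (65 / 100).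
Proof.
  pose proof (pow_one_plus_div_le_exp 8 (65 / 100)) as H.
  replace (INR 8) with 8 in H by (simpl; lra).
  assert (185 / 100 <= (1 + 65 / 100 / 8) ^ 8) by (simpl; lra).
  specialize (H ltac:(lia) ltac:(lra)). lra.
Qed.

Lemma sinh_65_le : sinh (65 / 100) <= 74 / 100.
Proof.
  pose proof (pow_one_plus_div_le_exp 8 (- (65 / 100))) as H.
  replace (INR 8) with 8 in H by (simpl; lra).
  specialize (H ltac:(lia) ltac:(lra)).
  assert (507 / 1000 <= (1 + - (65 / 100) / 8) ^ 8) by (simpl; lra).
  assert (HEF : exp (65 / 100) * exp (- (65 / 100)) = 1)
    by (rewrite <- exp_plus, Rplus_opp_r; apply exp_0).
  pose proof exp_65_ge.
  unfold sinh. set (E := exp (65 / 100)) in *. set (F := exp (- (65 / 100))) in *.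
  nra.
Qed.

Lemma z0_gt : 74 / 100 < z0.
Proof.
  assert (H5 : 22 / 10 < sqrt 5).
  { rewrite <- (sqrt_Rsqr (22 / 10)) by lra. apply sqrt_lt_1_alt. unfold Rsqr. lra. }
  unfold z0. rewrite <- (sqrt_Rsqr (74 / 100)) by lra.
  apply sqrt_lt_1_alt. unfold Rsqr. lra.
Qed.

Lemma div_cosh_lt (a b : R) : 0 <= a < b -> b <= 65 / 100 -> a / cosh a < b / cosh b.
Proof.
  intros Ha Hb.
  (* mean value theorem for x |-> x cosh b - b cosh x, whose derivative
     cosh b - b sinh x stays positive since b sinh x <= 0.65 * 0.74 < 1 *)
  destruct (MVT_cor2 (fun x => x * cosh b - b * cosh x)
              (fun x => cosh b - b * sinh x) a b) as [c [Hc Hcab]]; [lra | |].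
  - intros c _.
    replace (cosh b - b * sinh c) with (1 * cosh b - b * sinh c) by ring.
    apply (derivable_pt_lim_minus (fun x => x * cosh b) (fun x => b * cosh x)).
    + apply (derivable_pt_lim_scal_right id), derivable_pt_lim_id.
    + apply (derivable_pt_lim_scal cosh), derivable_pt_lim_cosh.
  - simpl in Hc.
    assert (sinh c <= sinh (65 / 100)) by (apply sinh_le; lra).
    assert (sinh 0 <= sinh c) by (apply sinh_le; lra).
    rewrite sinh_0 in *.
    pose proof sinh_65_le. pose proof (cosh_ge_1 a). pose proof (cosh_ge_1 b).
    assert (b * sinh c <= 65 / 100 * (74 / 100)) by nra.
    assert (Hswap : a * cosh b < b * cosh a) by nra.
    apply (Rmult_lt_reg_r (cosh a * cosh b)); [nra |].
    replace (a / cosh a * (cosh a * cosh b)) with (a * cosh b) by (field; lra).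
    replace (b / cosh b * (cosh a * cosh b)) with (b * cosh a) by (field; lra).
    exact Hswap.
Qed.

Lemma exists_div_cosh_eq (a u : R) :
  0 < a -> a <= u / cosh u -> exists z, 0 < z <= u /\ z / cosh z = a.
Proof.
  intros Ha Hau. pose proof (cosh_ge_1 u).
  assert (Hu : 0 < u).
  { apply (Rmult_lt_reg_r (/ cosh u)); [apply Rinv_0_lt_compat; lra | lra]. }
  assert (Hcont : continuity (fun x => x / cosh x - a)).
  { intro x. pose proof (cosh_ge_1 x).
    apply (continuity_pt_minus (fun x => x / cosh x) (fun _ => a)).
    - apply (continuity_pt_div (fun y => y) cosh); [| | lra].
      + apply derivable_continuous_pt, derivable_pt_id.
      + apply derivable_continuous_pt, derivable_pt_cosh.
    - apply continuity_pt_const. intros y z. reflexivity. }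
  destruct (IVT_cor _ 0 u Hcont ltac:(lra)) as [z [Hz Hza]].
  { unfold Rdiv. rewrite Rmult_0_l. nra. }
  exists z. destruct Hz as [[Hz0 | <-] Hzu].
  - split; [lra | lra].
  - unfold Rdiv in Hza. rewrite Rmult_0_l in Hza. lra.
Qed.

Lemma is_Pi_div_le (h r P u : R) :
  0 < h -> 0 < r -> h / r <= u / cosh u -> is_Pi h r P -> h / P <= u.
Proof.
  intros Hh Hr Hhr [HP [_ HPmax]].
  destruct (exists_div_cosh_eq (h / r) u) as [z [[Hz Hzu] Hza]];
    [apply Rdiv_lt_0_compat; lra | exact Hhr |].
  pose proof (cosh_ge_1 z).
  assert (Hhz : h / z <= P).
  { apply HPmax; [apply Rdiv_lt_0_compat; lra |].
    replace (h / (h / z)) with z by (field; lra).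
    replace r with (h / (z / cosh z)) by (rewrite Hza; field; lra).
    field. lra. }
  apply (Rmult_le_reg_r (P / z)); [apply Rdiv_lt_0_compat; lra |].
  replace (h / P * (P / z)) with (h / z) by (field; lra).
  replace (u * (P / z)) with (P * (u / z)) by (field; lra).
  assert (1 <= u / z).
  { apply (Rmult_le_reg_r z); [lra |]. replace (u / z * z) with u by (field; lra). lra. }
  nra.
Qed.

Lemma is_Pi_cosh (t : R) : 0 < t <= 65 / 100 -> is_Pi t (cosh t) 1.
Proof.
  intros Ht. split; [lra | split].
  - rewrite Rdiv_1_r. ring.
  - intros Q HQ HQt. destruct (Rle_or_lt Q 1) as [H | H]; [exact H | exfalso].
    assert (Hs : t / Q < t).
    { apply (Rmult_lt_reg_r Q); [lra |]. replace (t / Q * Q) with t by (field; lra). nra. }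
    assert (Hs0 : 0 < t / Q) by (apply Rdiv_lt_0_compat; lra).
    pose proof (div_cosh_lt (t / Q) t ltac:(lra) ltac:(lra)) as Hlt.
    pose proof (cosh_ge_1 (t / Q)).
    replace (t / Q / cosh (t / Q)) with (t / (Q * cosh (t / Q))) in Hlt by (field; lra).
    rewrite HQt in Hlt. lra.
Qed.

Lemma Xi_spec_inv_eq (xi : R) : Xi_spec xi -> / xi = (1 + / exp (/ xi) ^ 2) / 2.
Proof.
  intros [Hxi Heq]. set (u := / xi) in *.
  assert (Hu : 0 < u) by (apply Rinv_0_lt_compat; exact Hxi).
  replace xi with (/ u) in Heq by (unfold u; apply Rinv_inv).
  pose proof (cosh_ge_1 u).
  assert (Hsc : u = cosh u ^ 2 - sinh u * cosh u).
  { assert (Hmul : u * cosh u ^ 2 * (/ u * tanh u + / cosh u ^ 2) = u * cosh u ^ 2 * / u)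
      by (rewrite Heq; reflexivity).
    unfold tanh in Hmul.
    replace (u * cosh u ^ 2 * (/ u * (sinh u / cosh u) + / cosh u ^ 2))
      with (sinh u * cosh u + u) in Hmul by (field; lra).
    replace (u * cosh u ^ 2 * / u) with (cosh u ^ 2) in Hmul by (field; lra).
    lra. }
  pose proof (exp_pos u). transitivity (cosh u ^ 2 - sinh u * cosh u); [exact Hsc |].
  unfold cosh, sinh. rewrite exp_Ropp. field. lra.
Qed.

Lemma Xi_spec_inv_bounds (xi : R) : Xi_spec xi -> 1 / 2 < / xi < 65 / 100.
Proof.
  intros Hxi. pose proof (Xi_spec_inv_eq xi Hxi) as Hu.
  set (u := / xi) in *. pose proof (exp_pos u) as HE.
  assert (0 < / exp u ^ 2) by (apply Rinv_0_lt_compat, pow_lt; lra).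
  split; [lra |].
  destruct (Rlt_or_le u (65 / 100)) as [Hlt | Hge]; [exact Hlt | exfalso].
  pose proof exp_65_ge.
  assert (185 / 100 <= exp u).
  { destruct Hge as [Hgt | <-]; [left; apply exp_increasing in Hgt |]; lra. }
  assert (/ exp u ^ 2 <= / (185 / 100) ^ 2)
    by (apply Rinv_le_contravar; [simpl; lra | apply pow_incr; lra]).
  simpl in *. lra.
Qed.

Theorem lemma4p2 (xi : R) (Hxi : Xi_spec xi)
  (Huniq : forall y, Xi_spec y -> y = xi) :
  exists s, is_lub (sinh_set xi) s /\ s < z0.
Proof.
  pose proof (Xi_spec_inv_bounds xi Hxi) as Hu. set (u := / xi) in *.
  assert (Hom : omega xi = u / cosh u).
  { destruct Hxi as [Hxi0 _]. pose proof (cosh_ge_1 u).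
    unfold omega, u in *. field. lra. }
  assert (Hub : forall s, sinh_set xi s -> s <= sinh u).
  { intros s (h & r & P & Hh & Hr & Hhr & HP & ->). rewrite Hom in Hhr.
    apply sinh_le, (is_Pi_div_le h r P u); assumption. }
  assert (Hhalf : sinh_set xi (sinh (1 / 2))).
  { exists (1 / 2), (cosh (1 / 2)), 1.
    split; [lra | split; [pose proof (cosh_ge_1 (1 / 2)); lra | split; [| split]]].
    - rewrite Hom. left. apply div_cosh_lt; lra.
    - apply is_Pi_cosh; lra.
    - rewrite Rdiv_1_r. reflexivity. }
  destruct (completeness (sinh_set xi)) as [m Hm];
    [exists (sinh u); exact Hub | exists (sinh (1 / 2)); exact Hhalf |].
  exists m. split; [exact Hm |].
  assert (m <= sinh u) by (apply Hm; exact Hub).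
  assert (sinh u <= sinh (65 / 100)) by (apply sinh_le; lra).
  pose proof sinh_65_le. pose proof z0_gt. lra.
Qed.
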